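(* Let $\varphi_{-2,1}(\tau,z)=\vartheta_1(\tau,z)^2/\eta(\tau)^6$, and write its Fourier expansion as $\varphi_{-2,1}(\tau,z)=\sum_{n,r\in\mathbb{Z}} C_{-2}(4n-r^2)\,q^n\zeta^r$ (the coefficient depends only on $4n-r^2$). Then for every integer $\Delta\ge -1$ with $\Delta\equiv 0$ or $3 \pmod 4$ one has $(-1)^{\Delta+1}C_{-2}(\Delta)>0$.
   Context: $\tau$ is in the upper half-plane, $z\in\mathbb{C}$, $q=e^{2\pi i\tau}$, $\zeta=e^{2\pi i z}$. $\vartheta_1(\tau,z)=\sum_{n\in\mathbb{Z}}(-1)^n q^{\frac12(n-\frac12)^2}\zeta^{n-\frac12}$ and $\eta(\tau)=q^{1/24}\prod_{n\ge1}(1-q^n)$. The function $\varphi_{-2,1}$ is a weak Jacobi form of weight $-2$ and index $1$, so its coefficient of $q^n\zeta^r$ depends only on the discriminant $\Delta=4n-r^2$, which is $\equiv 0,3 \pmod 4$ and $\ge -1$ for nonzero coefficients. *)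

(* Formal Fourier expansions in the variables
   Q = q^(1/24) (exponent a : nat) and Z = zeta^(1/2) (exponent b : int),
   so that theta_1, eta and theta_1^2/eta^6 all have integral exponents. *)
From mathcomp Require Import all_boot all_order all_algebra.
Set Implicit Arguments. Unset Strict Implicit. Unset Printing Implicit Defensive.
Import Order.TTheory GRing.Theory Num.Theory.
Local Open Scope ring_scope.

(* Coefficient of Q^a Z^b in theta_1(tau,z) = sum_n (-1)^n q^((n-1/2)^2/2) zeta^(n-1/2).
   With b = 2n-1 (odd) the q-exponent is b^2/8, i.e. Q-exponent 3 b^2, and
   the sign is (-1)^n with n = (b+1)/2. *)
Definition theta1_coef (a : nat) (b : int) : int :=
  if odd `|b|%N && (a == 3 * `|b| ^ 2)%N
  then (-1) ^+ `|((b + 1) %/ 2)%Z|%N else 0.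

(* Coefficient of Q^a Z^b in theta_1^2 (Cauchy product; only |b1| <= a can
   contribute since theta1_coef a1 b1 = 0 unless a1 = 3 b1^2). *)
Definition theta1_sq_coef (a : nat) (b : int) : int :=
  \sum_(a1 < a.+1) \sum_(i < (2 * a).+1)
     theta1_coef a1 (i%:Z - a%:Z) * theta1_coef (a - a1)%N (b - (i%:Z - a%:Z)).

(* Coefficient of Q^j in eta^6 = (Q * prod_(k>=1) (1 - Q^(24k)))^6; the factors
   with k > j do not affect the coefficient of Q^j. *)
Definition eta6_coef (j : nat) : int :=
  (('X * \prod_(1 <= k < j.+1) (1 - 'X^(24 * k))) ^+ 6 : {poly int})`_j.

From mathcomp Require Import all_boot all_order all_algebra zify ring.
Set Implicit Arguments.
Unset Strict Implicit.
Unset Printing Implicit Defensive.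

Import Order.TTheory GRing.Theory Num.Theory.
Local Open Scope ring_scope.

(* Write phi_{-2,1} = q^(-1/4) theta_1^2 / prod (1 - q^k)^6.  The inverse of
   prod (1 - q^k)^6 is prod (1 + q^k + q^2k + ...)^6, whose coefficients are all
   at least 1.  In theta_1^2 the coefficient of zeta^r is a sum over pairs of odd
   b1 + b2 = 2r, each with sign (-1)^((b1+1)/2 + (b2+1)/2) = (-1)^(r+1), and
   (-1)^(r+1) = (-1)^(Delta+1) because r^2 = r mod 2.  Hence (-1)^(Delta+1) C(Delta)
   is a sum of nonnegative terms.  It is positive: b1 = b2 = r (r odd), or
   b1 = r + 1, b2 = r - 1 (r even), gives a term of theta_1^2 at
   q^((b1^2 + b2^2)/8) = q^(n - k + 1/4) with 0 <= k <= n, which meets q^k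
   in the inverted product. *)

Section TruncatedEquality.
Context {R : nzRingType}.
Implicit Types p q : {poly R}.

Definition trunc_eq (m : nat) p q := forall i, (i < m)%N -> p`_i = q`_i.

Lemma trunc_eq_refl m p : trunc_eq m p p.
Proof. by []. Qed.

Lemma trunc_eqM m p p' q q' :
  trunc_eq m p p' -> trunc_eq m q q' -> trunc_eq m (p * q) (p' * q').
Proof.
move=> epp' eqq' i lt_im; rewrite !coefM; apply: eq_bigr => -[j /= lt_ji] _.
by rewrite epp' ?eqq' //; lia.
Qed.

Lemma trunc_eqX m p q k : trunc_eq m p q -> trunc_eq m (p ^+ k) (q ^+ k).
Proof.
by move=> epq; elim: k => [|k IHk] //; rewrite !exprS; apply: trunc_eqM.
Qed.

Lemma trunc_eq_prod1 m a b (F : nat -> {poly R}) :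
  (forall k, (a <= k < b)%N -> trunc_eq m (F k) 1) ->
  trunc_eq m (\prod_(a <= k < b) F k) 1.
Proof.
move=> eF1; rewrite big_seq; apply: (big_ind (fun p => trunc_eq m p 1)) => //.
- by move=> p q ep eq; rewrite -(mulr1 1); apply: trunc_eqM.
- by move=> k; rewrite mem_index_iota; apply: eF1.
Qed.

Lemma trunc_eq_1subXn m d : (m <= d)%N -> trunc_eq m (1 - 'X^d) 1.
Proof.
move=> le_md i lt_im; rewrite coefB coefXn.
have -> : (i == d) = false by apply/negbTE/eqP; lia.
by rewrite subr0.
Qed.

End TruncatedEquality.

Section GeometricPoly.
Context {R : nzRingType}.

Definition geom_poly (d K : nat) : {poly R} := \sum_(i < K) 'X^(d * i).

Lemma mul_1subXn_geom_poly d K : (1 - 'X^d) * geom_poly d K = 1 - 'X^(d * K).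
Proof.
rewrite /geom_poly [in RHS]exprM -[in RHS](opprB _ 1) subrX1 -mulNr opprB.
congr (_ * _).
by apply: eq_bigr => i _; rewrite exprM.
Qed.

Lemma coef0_geom_poly d K : (0 < d)%N -> (0 < K)%N -> (geom_poly d K)`_0 = 1.
Proof.
move=> d_gt0; case: K => // K _; rewrite coef_sum big_ord_recl /= coefXn muln0.
by rewrite big1 ?addr0 // => i _; rewrite coefXn /bump /=; case: eqP => //; lia.
Qed.

Lemma coef0_prod_geom_poly (s : seq nat) (D : nat -> nat) K :
  (0 < K)%N -> (forall k, k \in s -> 0 < D k)%N ->
  (\prod_(k <- s) geom_poly (D k) K)`_0 = 1.
Proof.
move=> K_gt0 D_gt0; rewrite coef0_prod big1_seq // => k /andP[_ s_k].
exact: coef0_geom_poly (D_gt0 k s_k) K_gt0.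
Qed.

End GeometricPoly.

Section NonnegCoefs.
Context {R : numDomainType}.
Implicit Types p q : {poly R}.

Definition nonneg_coefs p := forall i, 0 <= p`_i.

Lemma ler_sum_term (I : finType) (F : I -> R) i0 :
  (forall i, 0 <= F i) -> F i0 <= \sum_i F i.
Proof. by move=> F_ge0; rewrite (bigD1 i0) //= lerDl sumr_ge0. Qed.
Arguments ler_sum_term {I F}.

Lemma nonneg_coefs1 : nonneg_coefs 1.
Proof. by move=> i; rewrite coef1; case: (i == 0)%N. Qed.

Lemma nonneg_coefsM p q :
  nonneg_coefs p -> nonneg_coefs q -> nonneg_coefs (p * q).
Proof.
by move=> p_ge0 q_ge0 i; rewrite coefM sumr_ge0 // => j _; rewrite mulr_ge0.
Qed.

Lemma nonneg_coefsX p k : nonneg_coefs p -> nonneg_coefs (p ^+ k).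
Proof.
move=> p_ge0; elim: k => [|k IHk]; first exact: nonneg_coefs1.
by rewrite exprS; apply: nonneg_coefsM.
Qed.

Lemma nonneg_coefs_prod a b (F : nat -> {poly R}) :
  (forall k, (a <= k < b)%N -> nonneg_coefs (F k)) ->
  nonneg_coefs (\prod_(a <= k < b) F k).
Proof.
move=> F_ge0; rewrite big_seq; apply: big_ind.
- exact: nonneg_coefs1.
- exact: nonneg_coefsM.
- by move=> k; rewrite mem_index_iota; apply: F_ge0.
Qed.

Lemma coefM_ge p q i j : nonneg_coefs p -> nonneg_coefs q ->
  p`_i * q`_j <= (p * q)`_(i + j).
Proof.
move=> p_ge0 q_ge0; rewrite coefM.
have lt_i : (i < (i + j).+1)%N by lia.
apply: le_trans (ler_sum_term (Ordinal lt_i) _) => [|k]; first by rewrite addKn.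
exact: mulr_ge0.
Qed.

Lemma nonneg_geom_poly d K : nonneg_coefs (geom_poly d K : {poly R}).
Proof.
by move=> i; rewrite coef_sum sumr_ge0 // => k _; rewrite coefXn; case: (_ == _).
Qed.

Lemma coef_geom_poly_ge1 d K k : (k < K)%N -> 1 <= (geom_poly d K : {poly R})`_(d * k).
Proof.
move=> lt_kK; rewrite coef_sum.
apply: le_trans (ler_sum_term (Ordinal lt_kK) _) => [|i]; first by rewrite coefXn eqxx.
by rewrite coefXn; case: (_ == _).
Qed.

End NonnegCoefs.

Definition eta_prod (K : nat) : {poly int} := \prod_(1 <= k < K) (1 - 'X^(24 * k)).

Definition eta_prod_inv (K : nat) : {poly int} :=
  \prod_(1 <= k < K) geom_poly (24 * k) K.

Lemma eta_prod_trunc j K : (j < K)%N -> trunc_eq j.+1 (eta_prod K) (eta_prod j.+1).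
Proof.
move=> lt_jK; rewrite /eta_prod (big_cat_nat _ (n := j.+1)) //=.
rewrite -[X in trunc_eq _ _ X]mulr1; apply: trunc_eqM => //.
by apply: trunc_eq_prod1 => k lt_jk; apply: trunc_eq_1subXn; lia.
Qed.

Lemma eta_prod_invP K m : (m <= 24 * K)%N -> trunc_eq m (eta_prod K * eta_prod_inv K) 1.
Proof.
move=> le_mK; rewrite /eta_prod /eta_prod_inv -big_split /=.
apply: trunc_eq_prod1 => k lt_k.
by rewrite mul_1subXn_geom_poly; apply: trunc_eq_1subXn; nia.
Qed.

Lemma nonneg_eta_prod_inv K : nonneg_coefs (eta_prod_inv K).
Proof. by apply: nonneg_coefs_prod => k _; apply: nonneg_geom_poly. Qed.

Lemma coef_eta_prod_inv_ge1 K k : (1 < K)%N -> (k < K)%N ->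
  1 <= (eta_prod_inv K)`_(24 * k).
Proof.
move=> K_gt1 lt_kK; rewrite /eta_prod_inv big_ltn // -[(24 * k)%N]addn0.
apply: (le_trans _ (coefM_ge _ _ (nonneg_geom_poly _ _) (nonneg_coefs_prod _))) => [|i _].
  rewrite coef0_prod_geom_poly; [|lia|by move=> i; rewrite mem_index_iota; lia].
  by rewrite mulr1 muln1 coef_geom_poly_ge1.
exact: nonneg_geom_poly.
Qed.

Lemma coef_eta_prod_inv6_ge1 K k : (1 < K)%N -> (k < K)%N ->
  1 <= (eta_prod_inv K ^+ 6)`_(24 * k).
Proof.
move=> K_gt1 lt_kK; have G_ge0 := nonneg_eta_prod_inv K.
rewrite exprS -[(24 * k)%N]addn0.
apply: (le_trans _ (coefM_ge _ _ G_ge0 (nonneg_coefsX 5 G_ge0))).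
rewrite -horner_coef0 horner_exp horner_coef0.
rewrite /eta_prod_inv coef0_prod_geom_poly; [|lia|by move=> i; rewrite mem_index_iota; lia].
by rewrite expr1n mulr1 coef_eta_prod_inv_ge1.
Qed.

Lemma eta6_coefE K j : (j < K)%N ->
  eta6_coef j = if (j < 6)%N then 0 else (eta_prod K ^+ 6)`_(j - 6).
Proof.
move=> lt_jK; rewrite /eta6_coef -/(eta_prod j.+1) exprMn coefXnM.
case: ltnP => // le6j; symmetry.
by apply: (trunc_eqX 6 (eta_prod_trunc lt_jK)); lia.
Qed.

Section PhiCoefficients.
Variable phi : nat -> int -> int.
Hypothesis hphi : forall (a : nat) (b : int),
  \sum_(j < a.+1) phi (a - j)%N b * eta6_coef j = theta1_sq_coef a b.

Lemma phi_eta_prod6 K a b : (a + 6 < K)%N ->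
  \sum_(j < a.+1) phi (a - j)%N b * (eta_prod K ^+ 6)`_j = theta1_sq_coef (a + 6) b.
Proof.
move=> lt_aK; rewrite -hphi.
have -> : (a + 6).+1 = (6 + a.+1)%N by lia.
rewrite big_split_ord /= [in RHS]big1 ?add0r => [|i _]; last first.
  have lt_i6 := ltn_ord i; rewrite (@eta6_coefE K) /= ?lt_i6 ?mulr0 //; lia.
apply: eq_bigr => -[j /= lt_ja] _.
rewrite (@eta6_coefE K); last by lia.
by rewrite ltnNge leq_addr /= addKn subnDA addnK.
Qed.

Lemma phi_coefE M b :
  phi M b = (\poly_(i < M.+1) theta1_sq_coef (i + 6) b * eta_prod_inv (M + 7) ^+ 6)`_M.
Proof.
set K := (M + 7)%N; set F := \poly_(i < M.+1) phi i b.
set T := \poly_(i < M.+1) theta1_sq_coef (i + 6) b.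
have FE : trunc_eq M.+1 (F * eta_prod K ^+ 6) T.
  move=> a lt_aM; rewrite coefMr coef_poly lt_aM -(@phi_eta_prod6 K); last by lia.
  by apply: eq_bigr => -[j /= lt_ja] _; rewrite coef_poly ifT //; lia.
have ED : trunc_eq M.+1 (eta_prod K ^+ 6 * eta_prod_inv K ^+ 6) 1.
  rewrite -exprMn -(expr1n _ 6); apply: trunc_eqX; apply: eta_prod_invP; lia.
have -> : phi M b = (F * (eta_prod K ^+ 6 * eta_prod_inv K ^+ 6))`_M.
  by rewrite (trunc_eqM (@trunc_eq_refl _ _ F) ED) // mulr1 coef_poly ltnSn.
by rewrite mulrA (trunc_eqM FE (@trunc_eq_refl _ _ _)).
Qed.

End PhiCoefficients.

Lemma signr_absD (R : pzRingType) (x y : int) :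
  (-1) ^+ `|(x + y)%R|%N = (-1) ^+ `|x|%N * (-1) ^+ `|y|%N :> R.
Proof.
rewrite -!(signr_odd _ `|_|%N) -signr_addb; congr (_ ^+ nat_of_bool _).
by case: (boolP (odd `|x|%N)); case: (boolP (odd `|y|%N)) => /= ? ?; lia.
Qed.

Lemma odd_abs_sqrB (r : int) : odd `|(r ^+ 2 - r)%R|%N = false.
Proof.
have [q [->|->]] : exists q, r = 2 * q \/ r = 2 * q + 1 by exists (r %/ 2)%Z; lia.
- by rewrite (_ : _ - _ = 2 * (2 * q ^+ 2 - q)); [lia | ring].
- by rewrite (_ : _ - _ = 2 * (2 * q ^+ 2 + q)); [lia | ring].
Qed.

Lemma signr_disc (n : nat) (r : int) :
  (-1) ^+ `|(4 * n%:Z - r ^+ 2 + 1)%R|%N = (-1) ^+ `|(r + 1)%R|%N :> int.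
Proof.
have := odd_abs_sqrB r; rewrite -!(signr_odd _ `|_|%N) => even_r2r.
by congr (_ ^+ nat_of_bool _); lia.
Qed.

Definition theta1_support (a : nat) (b : int) : bool :=
  odd `|b|%N && (a == 3 * `|b| ^ 2)%N.

Lemma theta1_coef_pair_sign (r : int) a1 a2 b1 b2 : b1 + b2 = 2 * r ->
  (-1) ^+ `|(r + 1)%R|%N * (theta1_coef a1 b1 * theta1_coef a2 b2)
  = (theta1_support a1 b1 && theta1_support a2 b2)%:R.
Proof.
move=> b12; rewrite /theta1_coef /theta1_support.
case: ifP => [/andP[odd_b1 _]|_]; last by rewrite mul0r mulr0.
case: ifP => [/andP[odd_b2 _]|_]; last by rewrite !mulr0.
have -> : ((b1 + 1) %/ 2)%Z = r + 1 - ((b2 + 1) %/ 2)%Z by lia.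
by rewrite -signr_absD subrK -[RHS](signrMK `|(r + 1)%R|%N) mulr1.
Qed.

Lemma theta1_sq_coef_signE (r : int) c :
  (-1) ^+ `|(r + 1)%R|%N * theta1_sq_coef c (2 * r)
  = \sum_(a1 < c.+1) \sum_(i < (2 * c).+1)
      (theta1_support a1 (i%:Z - c%:Z)
       && theta1_support (c - a1) (2 * r - (i%:Z - c%:Z)))%:R.
Proof.
rewrite /theta1_sq_coef mulr_sumr; apply: eq_bigr => a1 _.
by rewrite mulr_sumr; apply: eq_bigr => i _; rewrite theta1_coef_pair_sign // addrC subrK.
Qed.

Lemma theta1_sq_coef_sign_ge0 (r : int) c :
  0 <= (-1) ^+ `|(r + 1)%R|%N * theta1_sq_coef c (2 * r).
Proof.
by rewrite theta1_sq_coef_signE; do 2 (apply: sumr_ge0 => ? _); case: (_ && _).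
Qed.

Lemma abszX2 (x : int) : (`|x| ^ 2)%N%:Z = x ^+ 2.
Proof. by rewrite -natz natrX natz abszE real_normK ?num_real. Qed.

Lemma theta1_sq_coef_sign_ge1 (r b1 b2 : int) (c : nat) :
  odd `|b1|%N -> odd `|b2|%N -> b1 + b2 = 2 * r -> c%:Z = 3 * b1 ^+ 2 + 3 * b2 ^+ 2 ->
  1 <= (-1) ^+ `|(r + 1)%R|%N * theta1_sq_coef c (2 * r).
Proof.
move=> odd_b1 odd_b2 b12; rewrite -!abszX2 theta1_sq_coef_signE.
have : (`|b1| <= 3 * `|b1| ^ 2)%N by nia.
set A1 := (`|b1| ^ 2)%N; set A2 := (`|b2| ^ 2)%N => le_b1A1 cE.
have lt_a1c : (3 * A1 < c.+1)%N by lia.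
have lt_ic : (`|(b1 + c%:Z)%R| < (2 * c).+1)%N by lia.
apply: (le_trans _ (ler_sum_term (Ordinal lt_a1c) _)) => [|a1]; last first.
  by apply: sumr_ge0 => i _; case: (_ && _).
apply: (le_trans _ (ler_sum_term (Ordinal lt_ic) _)) => [|i]; last by case: (_ && _).
rewrite /= /theta1_support.
have -> : `|(b1 + c%:Z)%R|%:Z - c%:Z = b1 by lia.
have -> : 2 * r - b1 = b2 by lia.
have -> : (c - 3 * A1 = 3 * A2)%N by lia.
by rewrite odd_b1 odd_b2 !eqxx.
Qed.

Lemma theta1_sq_coef_witness (n : nat) (r : int) : -1 <= 4 * n%:Z - r ^+ 2 ->
  exists2 k, (k <= n)%N &
    1 <= (-1) ^+ `|(r + 1)%R|%N * theta1_sq_coef (24 * (n - k) + 6) (2 * r).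
Proof.
have [q [->|->]] : exists q, r = 2 * q \/ r = 2 * q + 1 by exists (r %/ 2)%Z; lia.
- move=> disc_ge; have r2E : (2 * q) ^+ 2 = 4 * q ^+ 2 by ring.
  have cE : 3 * (2 * q + 1) ^+ 2 + 3 * (2 * q - 1) ^+ 2 = 24 * q ^+ 2 + 6 by ring.
  have q2_ge0 := sqr_ge0 q.
  exists (n - `|q ^+ 2|)%N; first exact: leq_subr.
  rewrite r2E in disc_ge.
  by apply: (@theta1_sq_coef_sign_ge1 _ (2 * q + 1) (2 * q - 1)); rewrite ?cE; lia.
- move=> disc_ge; have r2E : (2 * q + 1) ^+ 2 = 4 * (q ^+ 2 + q) + 1 by ring.
  have cE : 3 * (2 * q + 1) ^+ 2 + 3 * (2 * q + 1) ^+ 2 = 24 * (q ^+ 2 + q) + 6 by ring.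
  have qq_ge0 : 0 <= q ^+ 2 + q by nia.
  exists (n - `|(q ^+ 2 + q)%R|)%N; first exact: leq_subr.
  rewrite r2E in disc_ge.
  by apply: (@theta1_sq_coef_sign_ge1 _ (2 * q + 1) (2 * q + 1)); rewrite ?cE; lia.
Qed.

Theorem mainTheorem1 (phi : nat -> int -> int)
  (hphi : forall (a : nat) (b : int),
     \sum_(j < a.+1) phi (a - j)%N b * eta6_coef j = theta1_sq_coef a b) :
  forall (n : nat) (r : int), -1 <= 4 * n%:Z - r ^+ 2 ->
    0 < (-1) ^+ `|(4 * n%:Z - r ^+ 2 + 1)%R|%N * phi (24 * n)%N (2 * r).
Proof.
move=> n r disc_ge; rewrite signr_disc (phi_coefE hphi) -coefZ scalerAl.
have [k le_kn theta_ge1] := theta1_sq_coef_witness disc_ge.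
set T := _ *: \poly_(_ < _) _.
have T_ge0 : nonneg_coefs T.
  move=> i; rewrite coefZ coef_poly.
  by case: ifP => _; [exact: theta1_sq_coef_sign_ge0 | rewrite mulr0].
have -> : (24 * n = 24 * (n - k) + 24 * k)%N by lia.
apply: lt_le_trans (coefM_ge _ _ T_ge0 (nonneg_coefsX 6 (nonneg_eta_prod_inv _))).
rewrite coefZ coef_poly ifT; last by lia.
apply: (lt_le_trans ltr01); apply: mulr_ege1 => //.
by apply: coef_eta_prod_inv6_ge1; lia.
Qed.
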